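(* For any metric space $(X,d)$, the collection $\{\vec B_r(S): S\in\mathrm{K}(X),\ r\ge0\}$ is a basis for a topology on $\mathrm{K}(X)$.
   Context: $\mathrm{K}(X)$ is the set of non-empty $d$-compact subsets of $X$. For $S,S'\in\mathrm{K}(X)$, the one-sided Hausdorff distance is $\vec d(S,S'):=\max_{x\in S}\min_{x'\in S'}d(x,x')$, and $\vec B_r(S):=\{S'\in\mathrm{K}(X):\vec d(S',S)<r\}$. *)

From HB Require Import structures.
From mathcomp Require Import all_boot all_order all_algebra.
From mathcomp Require Import all_classical all_reals all_analysis.
Set Implicit Arguments. Unset Strict Implicit. Unset Printing Implicit Defensive.
Import Order.TTheory GRing.Theory Num.Theory.
Local Open Scope classical_set_scope.
Local Open Scope ring_scope.

Definition Kset {R : realType} (X : metricType R) : set (set X) :=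
  [set S | S !=set0 /\ compact S].

(* one-sided Hausdorff distance  max_{x in S} min_{x' in S'} d(x,x')
   (written with sup/inf, which are attained for non-empty compact sets) *)
Definition hdist {R : realType} {X : metricType R} (S S' : set X) : R :=
  sup [set inf [set mdist x x' | x' in S'] | x in S].

Definition vball {R : realType} {X : metricType R} (S : set X) (r : R)
  : set (set X) :=
  [set S' | @Kset R X S' /\ hdist S' S < r].

Definition is_basis_on {T : Type} (D : set T) (B : set (set T)) : Prop :=
  [/\ (forall b, B b -> b `<=` D),
      (forall x, D x -> exists b, B b /\ b x) &
      (forall b1 b2 x, B b1 -> B b2 -> b1 x -> b2 x ->
         exists b3, [/\ B b3, b3 x & b3 `<=` b1 `&` b2])].

From HB Require Import structures.
From mathcomp Require Import all_boot all_order all_algebra.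
From mathcomp Require Import all_classical all_reals all_analysis.
Set Implicit Arguments. Unset Strict Implicit. Unset Printing Implicit Defensive.
Import Order.TTheory GRing.Theory Num.Theory.
Local Open Scope classical_set_scope.
Local Open Scope ring_scope.

(* The one-sided Hausdorff distance satisfies [hdist S S = 0] and the
   triangle inequality [hdist A C <= hdist A B + hdist B C] on K(X).  Hence if
   [T] lies in [vball S r], every [T'] with [hdist T' T < r - hdist T S] lies
   in [vball S r] as well; so [T] is in [vball T e], with [e] the smaller of the
   two slacks, which sits inside any two basic sets containing [T]. *)

Section one_sided_hausdorff.
Context {R : realType} {X : metricType R}.

Definition infdist (a : X) (B : set X) : R := inf [set mdist a x | x in B].

Lemma hdistE (A B : set X) : hdist A B = sup [set infdist a B | a in A].
Proof. by []. Qed.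

Lemma compact_mdist_bounded (z : X) (A : set X) :
  compact A -> exists M, forall a, A a -> mdist z a <= M.
Proof.
move=> /compact_near_coveringP cA.
have [|M0 [_ HM]] := cA R (pinfty_nbhs R) (fun M a => mdist z a <= M).
  move=> x Ax; exists (ball x 1, [set M | mdist z x + 1 < M]) => /=.
    by split; [exact: nbhsx_ballx | exact/nbhs_pinfty_gt/num_real].
  move=> [a M] [/= xa MzX]; rewrite ballEmdist /= in xa.
  apply/ltW/(le_lt_trans (metric_triangle z x a))/(lt_trans _ MzX).
  by rewrite ltrD2l.
by exists (M0 + 1) => a Aa; apply: (HM (M0 + 1)) => //=; rewrite ltrDl.
Qed.

Lemma infdist_ge0 (a : X) (B : set X) : 0 <= infdist a B.
Proof.
have [->|/set0P[b Bb]] := eqVneq B set0; first by rewrite /infdist image_set0 inf0.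
apply: lb_le_inf; first by exists (mdist a b), b.
by move=> _ [x _ <-]; exact: mdist_ge0.
Qed.

Lemma infdist_le (a b : X) (B : set X) : B b -> infdist a B <= mdist a b.
Proof.
move=> Bb; apply: ge_inf; last by exists b.
by exists 0 => _ [x _ <-]; exact: mdist_ge0.
Qed.

Lemma infdist_in (a : X) (A : set X) : A a -> infdist a A = 0.
Proof.
by move=> Aa; apply/eqP; rewrite eq_le infdist_ge0 -(mdistxx a) infdist_le.
Qed.

Lemma infdist_triangle (a b : X) (C : set X) :
  C !=set0 -> infdist a C <= mdist a b + infdist b C.
Proof.
move=> [c Cc]; rewrite -lerBlDl; apply: lb_le_inf; first by exists (mdist b c), c.
move=> _ [c' Cc' <-]; rewrite lerBlDl.
exact: le_trans (infdist_le a Cc') (metric_triangle _ _ _).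
Qed.

Lemma infdist_le_hdist (A B : set X) (a : X) :
  compact A -> B !=set0 -> A a -> infdist a B <= hdist A B.
Proof.
move=> cA [b Bb] Aa; apply: ub_le_sup; last by exists a.
have [M HM] := compact_mdist_bounded b cA.
exists M => _ [a' Aa' <-]; rewrite (le_trans (infdist_le a' Bb)) // metric_sym.
exact: HM.
Qed.

Lemma hdistxx (A : set X) : A !=set0 -> hdist A A = 0.
Proof.
move=> [a0 Aa0]; rewrite hdistE.
suff -> : [set infdist a A | a in A] = [set 0] by rewrite sup1.
apply/seteqP; split=> [_ [a Aa <-]|_ ->]; first exact: infdist_in.
by exists a0; rewrite ?infdist_in.
Qed.

Lemma hdist_triangle (A B C : set X) :
  A !=set0 -> compact A -> B !=set0 -> compact B -> C !=set0 ->
  hdist A C <= hdist A B + hdist B C.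
Proof.
move=> [a0 Aa0] cA nB cB nC; rewrite hdistE.
apply: ge_sup; first by exists (infdist a0 C), a0.
move=> _ [a Aa <-]; rewrite -lerBlDr.
apply: le_trans _ (infdist_le_hdist cA nB Aa).
case: (nB) => b Bb; apply: lb_le_inf; first by exists (mdist a b), b.
move=> _ [b' Bb' <-]; rewrite lerBlDr.
apply: le_trans (infdist_triangle a b' nC) _.
by rewrite lerD2l infdist_le_hdist.
Qed.

Lemma vball_center (S : set X) (r : R) : Kset S -> 0 < r -> vball S r S.
Proof. by move=> KS r0; split=> //; case: KS => nS _; rewrite hdistxx. Qed.

Lemma vball_sub (S T : set X) (r e : R) :
  Kset S -> Kset T -> hdist T S + e <= r -> vball T e `<=` vball S r.
Proof.
move=> [nS _] [nT cT] le_r T' [[nT' cT'] hT']; split=> //.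
apply: le_lt_trans (hdist_triangle nT' cT' nT cT nS) _.
by rewrite addrC; apply: lt_le_trans le_r; rewrite ltrD2l.
Qed.

End one_sided_hausdorff.

Theorem lemma3p12 (R : realType) (X : metricType R) :
  is_basis_on (@Kset R X)
    [set b | exists (S : set X) (r : R), [/\ @Kset R X S, 0 <= r & b = vball S r]].
Proof.
split.
- by move=> _ [S [r [_ _ ->]]] T [].
- move=> S KS; exists (vball S 1); split; first by exists S, 1.
  exact: vball_center.
- move=> _ _ T [S1 [r1 [KS1 _ ->]]] [S2 [r2 [KS2 _ ->]]] [KT h1] [_ h2].
  pose e := Num.min (r1 - hdist T S1) (r2 - hdist T S2).
  have e_gt0 : 0 < e by rewrite lt_min !subr_gt0 h1 h2.
  exists (vball T e); split.
  + by exists T, e; split => //; exact: ltW.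
  + exact: vball_center.
  + move=> T' T'e; split.
    * apply: (vball_sub KS1 KT) T'e.
      by rewrite addrC -lerBrDr ge_min lexx.
    * apply: (vball_sub KS2 KT) T'e.
      by rewrite addrC -lerBrDr ge_min lexx orbT.
Qed.
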